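(* Let $p = p_{AB}$ be a probability distribution on $A\times B$ with $|A| = |B| = d$, and write $\eta = d_H^2(p\|p_A\times p_B)$. Then $I(A:B)_p\le\eta\cdot O(\log(d/\eta))$.
   Context: $p_A,p_B$ are the marginals of $p$. The squared Hellinger distance is $d_H^2(p\|q) = \sum_i(\sqrt{p_i}-\sqrt{q_i})^2$. $I(A:B)_p = \sum_{a,b}p(a,b)\ln\frac{p(a,b)}{p_A(a)p_B(b)}$. The $O(\cdot)$ hides a universal constant. *)

From HB Require Import structures.
From mathcomp Require Import all_boot all_order all_algebra.
From mathcomp Require Import all_classical all_reals all_analysis.
Set Implicit Arguments. Unset Strict Implicit. Unset Printing Implicit Defensive.
Import Order.TTheory GRing.Theory Num.Theory.
Local Open Scope ring_scope.

Definition is_distr (R : realType) (T : finType) (p : T -> R) : Prop :=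
  (forall x, 0 <= p x) /\ \sum_(x : T) p x = 1.

Definition margA (R : realType) (A B : finType) (p : A * B -> R) (a : A) : R :=
  \sum_(b : B) p (a, b).
Definition margB (R : realType) (A B : finType) (p : A * B -> R) (b : B) : R :=
  \sum_(a : A) p (a, b).

Definition hellinger2 (R : realType) (T : finType) (p q : T -> R) : R :=
  \sum_(i : T) (Num.sqrt (p i) - Num.sqrt (q i)) ^+ 2.

(* Mutual information (natural log); terms with p(a,b) = 0 contribute 0
   since ln 0 = 0 in MathComp-Analysis. *)
Definition mutinfo (R : realType) (A B : finType) (p : A * B -> R) : R :=
  \sum_(ab : A * B) p ab * ln (p ab / (margA p ab.1 * margB p ab.2)).

From HB Require Import structures.
From mathcomp Require Import all_boot all_order all_algebra.
From mathcomp Require Import all_classical all_reals all_analysis.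
From mathcomp Require Import ring lra.
Set Implicit Arguments. Unset Strict Implicit. Unset Printing Implicit Defensive.
Import Order.TTheory GRing.Theory Num.Theory.
Local Open Scope ring_scope.

(* I(A:B) is the relative entropy of p from q = p_A x p_B, a sum of the
   nonnegative terms p ln(p/q) - p + q.  For any t in (0,1] each term is at
   most 5 (sqrt p - sqrt q)^2 (1 + ln(1/t)) + t: if sqrt p <= 2 sqrt q it is
   O((sqrt p - sqrt q)^2), and otherwise p <= 4 (sqrt p - sqrt q)^2 while
   p^2 <= q (as p(a,b) <= p_A(a), p_B(b)) gives ln(p/q) <= ln(1/t) + t/p - 1.
   Summing over the d^2 pairs with t = eta/d^2 yields
   I <= 5 eta (1 + ln(d^2/eta)) + eta.  Finally eta <= 2 - 2/d, since the
   Bhattacharyya coefficient sum sqrt(p q) dominates sum_a p_A(a)^2 >= 1/d;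
   hence ln(d/eta) >= ln 2 and ln(d^2/eta) <= ln 2 + 2 ln(d/eta). *)

Section RealInequalities.
Variable R : realType.

Lemma ln_le_sub1 (x : R) : 0 < x -> ln x <= x - 1.
Proof.
move=> x0; have := @le_ln1Dx R (x - 1).
by rewrite [1 + _]addrC subrK; apply; lra.
Qed.

Definition kl_term (p q : R) : R := p * ln (p / q) - p + q.

Lemma kl_term_le_near (p q : R) : 0 < p -> 0 < q -> Num.sqrt p <= 2 * Num.sqrt q ->
  kl_term p q <= 5 * (Num.sqrt p - Num.sqrt q) ^+ 2.
Proof.
move=> p0 q0 uv; rewrite /kl_term.
set u := Num.sqrt p in uv *; set v := Num.sqrt q in uv *; set w := u / v.
have v0 : 0 < v by rewrite sqrtr_gt0.
have w0 : 0 < w by rewrite divr_gt0 ?sqrtr_gt0.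
have w2 : w <= 2 by rewrite ler_pdivrMr.
have uw : u = w * v by rewrite divfK ?gt_eqF.
have [pE qE] : p = (w * v) ^+ 2 /\ q = v ^+ 2 by rewrite -uw !sqr_sqrtr ?ltW.
have ln_pq : ln (p / q) <= 2 * (w - 1).
  rewrite pE qE exprMn mulfK ?expf_neq0 ?gt_eqF // lnXn //.
  by have := ln_le_sub1 w0; rewrite mulr2n; lra.
have := ler_wpM2l (ltW p0) ln_pq.
have : 0 <= v ^+ 2 * (w - 1) ^+ 2 * (4 - 2 * w).
  by apply: mulr_ge0; [apply: mulr_ge0; rewrite sqr_ge0 | lra].
rewrite uw pE qE; nra.
Qed.

Lemma kl_term_le_far (p q t : R) : 0 < p -> p ^+ 2 <= q -> 2 * Num.sqrt q <= Num.sqrt p ->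
  0 < t <= 1 -> kl_term p q <= 4 * (Num.sqrt p - Num.sqrt q) ^+ 2 * ln t^-1 + t.
Proof.
move=> p0 pq vu /andP[t0 t1]; rewrite /kl_term.
have q0 : 0 < q by apply: lt_le_trans pq; rewrite exprn_gt0.
have lnt0 : 0 <= ln t^-1 by rewrite ln_ge0 // invf_ge1.
set u := Num.sqrt p in vu *; set v := Num.sqrt q in vu *.
have [pE qE] : p = u ^+ 2 /\ q = v ^+ 2 by rewrite !sqr_sqrtr ?ltW.
have v0 : 0 < v by rewrite sqrtr_gt0.
have q_le_p : q <= p by rewrite pE qE; nra.
have p_le_h : p <= 4 * (u - v) ^+ 2 by rewrite pE; nra.
have ln_pq : ln (p / q) <= ln t^-1 + (t / p - 1).
  apply: (@le_trans _ _ (ln p^-1)).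
    rewrite ler_ln ?posrE ?divr_gt0 ?invr_gt0 //.
    by rewrite ler_pdivrMr // mulrC ler_pdivlMr // -expr2.
  rewrite -{1}[p^-1](mulKf (lt0r_neq0 t0)) lnM ?posrE ?invr_gt0 ?divr_gt0 // lerD2l.
  by apply: ln_le_sub1; rewrite divr_gt0.
have : p * ln (p / q) <= p * ln t^-1 + t - p.
  move: (ler_wpM2l (ltW p0) ln_pq).
  by rewrite mulrDr mulrBr mulr1 mulrCA divff ?gt_eqF // mulr1 addrA.
have : p * ln t^-1 <= 4 * (u - v) ^+ 2 * ln t^-1 by rewrite ler_wpM2r.
lra.
Qed.

Lemma kl_term_le (p q t : R) : 0 <= p -> p ^+ 2 <= q -> 0 < t <= 1 ->
  kl_term p q <= 5 * (Num.sqrt p - Num.sqrt q) ^+ 2 * (1 + ln t^-1) + t.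
Proof.
move=> p0 pq t01; have /andP[t0 t1] := t01.
have lnt0 : 0 <= ln t^-1 by rewrite ln_ge0 // invf_ge1.
have h0 : 0 <= (Num.sqrt p - Num.sqrt q) ^+ 2 := sqr_ge0 _.
have [->|pn0] := eqVneq p 0.
  rewrite /kl_term mul0r subrr add0r sqrtr0 sub0r sqrrN sqr_sqrtr; last first.
    by apply: le_trans pq; rewrite sqr_ge0.
  nra.
have {pn0 p0} p0 : 0 < p by rewrite lt0r pn0.
have q0 : 0 < q by apply: lt_le_trans pq; rewrite exprn_gt0.
have [near|far] := lerP (Num.sqrt p) (2 * Num.sqrt q).
  have := kl_term_le_near p0 q0 near; nra.
have := kl_term_le_far p0 pq (ltW far) t01; nra.
Qed.
End RealInequalities.

Lemma le_ln_ratio_bound (R : realType) (I d eta : R) :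
  0 < eta -> 2 * eta <= d -> eta <= 2 ->
  I <= 5 * eta * (1 + ln (d * d / eta)) + eta ->
  I <= (6 / ln 2 + 15) * (eta * ln (d / eta)).
Proof.
move=> eta0 eta_d eta2; have d0 : 0 < d by lra.
have ln2_0 : 0 < ln (2 : R) by rewrite ln_gt0 //; lra.
have r0 : 0 < d / eta by rewrite divr_gt0.
set L := ln (d / eta).
have ln_d : ln d <= ln 2 + L.
  rewrite -lnM ?posrE // ler_ln ?posrE ?mulr_gt0 ?invr_gt0 //.
  by rewrite mulrA ler_pdivlMr //; nra.
have ln2_L : ln 2 <= L by rewrite ler_ln ?posrE // ler_pdivlMr.
rewrite -[d * d / eta]mulrA lnM ?posrE // -/L => hI.
have : eta * ln d <= eta * (ln 2 + L) by rewrite ler_pM2l.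
have : eta * ln 2 <= eta * L by rewrite ler_pM2l.
have : eta <= eta * L / ln 2 by rewrite ler_pdivlMr // ler_pM2l.
have -> : (6 / ln 2 + 15) * (eta * L) = 6 * (eta * L / ln 2) + 15 * (eta * L).
  by field; rewrite gt_eqF.
nra.
Qed.

Lemma ler_term_sum (R : numDomainType) (T : finType) (F : T -> R) (i : T) :
  (forall j, 0 <= F j) -> F i <= \sum_j F j.
Proof. by move=> F0; rewrite (bigD1 i) //= lerDl sumr_ge0. Qed.

Section Distributions.
Variables (R : realType) (T : finType).

Lemma hellinger2_ge0 (p q : T -> R) : 0 <= hellinger2 p q.
Proof. by apply: sumr_ge0 => i _; apply: sqr_ge0. Qed.

Lemma hellinger2_distrE (p q : T -> R) : is_distr p -> is_distr q ->
  hellinger2 p q = 2 - 2 * \sum_i Num.sqrt (p i) * Num.sqrt (q i).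
Proof.
move=> [p0 p1] [q0 q1]; rewrite /hellinger2.
under eq_bigr do rewrite sqrrB !sqr_sqrtr // -mulr_natl.
rewrite !big_split /= sumrN -mulr_sumr p1 q1; lra.
Qed.

Lemma hellinger2_eq0 (p q : T -> R) : (forall i, 0 <= p i) -> (forall i, 0 <= q i) ->
  hellinger2 p q = 0 -> p =1 q.
Proof.
move=> p0 q0 h0 i; apply/eqP; rewrite -eqr_sqrt // -subr_eq0 -sqrf_eq0.
by rewrite (psumr_eq0P _ h0) // => j _; apply: sqr_ge0.
Qed.

Lemma distr_card_gt0 (r : T -> R) : is_distr r -> (0 < #|T|)%N.
Proof.
move=> [_ r1]; rewrite lt0n; apply: contra_eqN r1 => /eqP/card0_eq T0.
rewrite big_pred0 => [|i]; first by rewrite eq_sym oner_neq0.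
by rewrite -[RHS](T0 i).
Qed.

Lemma card_mul_sum_sqr_ge1 (r : T -> R) : is_distr r -> 1 <= #|T|%:R * \sum_i r i ^+ 2.
Proof.
move=> rd; have [_ r1] := rd; set d : R := #|T|%:R; set X := \sum_i r i ^+ 2.
have : 0 <= \sum_i (d * r i - 1) ^+ 2 by apply: sumr_ge0 => i _; apply: sqr_ge0.
rewrite (eq_bigr (fun i => d ^+ 2 * r i ^+ 2 - 2 * d * r i + 1)) => [|i _]; last by ring.
rewrite !big_split /= sumrN -!mulr_sumr r1 sumr_const -/X -/d.
have d0 : 0 < d by rewrite ltr0n (distr_card_gt0 rd).
move=> h; have : 0 <= d * (d * X - 1) by nra.
by rewrite pmulr_rge0 // subr_ge0.
Qed.

End Distributions.

Definition prodmarg (R : realType) (A B : finType) (p : A * B -> R) (ab : A * B) : R :=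
  margA p ab.1 * margB p ab.2.

Section JointDistribution.
Variables (R : realType) (A B : finType) (p : A * B -> R).
Hypothesis p_distr : is_distr p.

Let p_ge0 : forall x, 0 <= p x. Proof. by case: p_distr. Qed.
Let p_sum1 : \sum_x p x = 1. Proof. by case: p_distr. Qed.

Lemma margA_ge0 a : 0 <= margA p a. Proof. by apply: sumr_ge0 => b _. Qed.
Lemma margB_ge0 b : 0 <= margB p b. Proof. by apply: sumr_ge0 => a _. Qed.

Lemma sum_margA : \sum_a margA p a = 1.
Proof. by rewrite /margA pair_bigA -p_sum1; apply: eq_bigr => -[]. Qed.

Lemma sum_margB : \sum_b margB p b = 1.
Proof. by rewrite /margB exchange_big pair_bigA -p_sum1; apply: eq_bigr => -[]. Qed.

Lemma le_margA a b : p (a, b) <= margA p a.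
Proof. exact: (ler_term_sum b (fun b => p_ge0 (a, b))). Qed.

Lemma le_margB a b : p (a, b) <= margB p b.
Proof. exact: (ler_term_sum a (fun a => p_ge0 (a, b))). Qed.

Lemma margA_le1 a : margA p a <= 1.
Proof. by rewrite -sum_margA; apply: ler_term_sum; apply: margA_ge0. Qed.

Lemma prodmarg_ge0 x : 0 <= prodmarg p x.
Proof. by rewrite mulr_ge0 ?margA_ge0 ?margB_ge0. Qed.

Lemma prodmarg_distr : is_distr (prodmarg p).
Proof.
split; first exact: prodmarg_ge0.
rewrite -(pair_bigA _ (fun a b => margA p a * margB p b)) /=.
under eq_bigr do rewrite -mulr_sumr sum_margB mulr1.
exact: sum_margA.
Qed.

Lemma sqr_le_prodmarg x : p x ^+ 2 <= prodmarg p x.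
Proof. by case: x => a b; rewrite expr2 ler_pM ?le_margA ?le_margB. Qed.

Lemma mutinfoE : mutinfo p = \sum_x kl_term (p x) (prodmarg p x).
Proof.
have [_ q_sum1] := prodmarg_distr.
by rewrite !big_split /= sumrN p_sum1 q_sum1 subrK.
Qed.

Let eta := hellinger2 p (prodmarg p).

Lemma mutinfo_le_hellinger2 t : 0 < t <= 1 ->
  mutinfo p <= 5 * eta * (1 + ln t^-1) + t * (#|A| * #|B|)%:R.
Proof.
move=> t01; rewrite mutinfoE.
apply: le_trans (ler_sum _ (fun x _ => kl_term_le (p_ge0 x) (sqr_le_prodmarg x) t01)) _.
by rewrite big_split sumr_const card_prod -!mulr_suml -mulr_sumr mulr_natr.
Qed.

Lemma sum_sqr_margA_le : \sum_a margA p a ^+ 2 <= \sum_x Num.sqrt (p x) * Num.sqrt (prodmarg p x).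
Proof.
have -> : \sum_a margA p a ^+ 2 = \sum_x p x * margA p x.1.
  transitivity (\sum_a \sum_b p (a, b) * margA p a).
    by apply: eq_bigr => a _; rewrite -mulr_suml expr2.
  by rewrite pair_bigA; apply: eq_bigr => -[].
apply: ler_sum => -[a b] _ /=.
have pp := p_ge0 (a, b); have a0 := margA_ge0 a.
rewrite -sqrtrM // -(ger0_norm (mulr_ge0 pp a0)) -sqrtr_sqr ler_sqrt ?mulr_ge0 ?margB_ge0 //.
have pab : p (a, b) * margA p a <= margB p b.
  exact: le_trans (ler_piMr pp (margA_le1 a)) (le_margB a b).
rewrite /prodmarg /= expr2 [p (a, b) * (_ * _)]mulrA.
by rewrite ler_pM ?mulr_ge0.
Qed.

Lemma card_mul_hellinger2_le : #|A|%:R * eta <= 2 * #|A|%:R - 2.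
Proof.
have := card_mul_sum_sqr_ge1 (conj margA_ge0 sum_margA).
have := sum_sqr_margA_le.
rewrite /eta hellinger2_distrE //; last exact: prodmarg_distr.
have : 0 <= #|A|%:R :> R by rewrite ler0n.
nra.
Qed.

Lemma mutinfo_eq0 : eta = 0 -> mutinfo p = 0.
Proof.
move=> /(hellinger2_eq0 p_ge0 prodmarg_ge0) pq; rewrite /mutinfo.
apply: big1 => x _; rewrite -/(prodmarg p x) -pq.
have [->|px0] := eqVneq (p x) 0; first by rewrite mul0r.
by rewrite divff // ln1 mulr0.
Qed.

Lemma mutinfo_le_hellinger2_ln : #|A| = #|B| -> 0 < eta ->
  mutinfo p <= (6 / ln 2 + 15) * (eta * ln (#|A|%:R / eta)).
Proof.
move=> AB eta0; have := card_mul_hellinger2_le; set d : R := #|A|%:R => hd.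
have d_ge0 : 0 <= d by rewrite ler0n.
have d0 : 0 < d by nra.
have eta_d : 2 * eta <= d.
  by rewrite -(ler_pM2l d0); have := sqr_ge0 (d - 2); nra.
apply: le_ln_ratio_bound => //; first nra.
have t01 : 0 < eta / (d * d) <= 1.
  by rewrite divr_gt0 ?mulr_gt0 //= ler_pdivrMr ?mulr_gt0 //; nra.
have := mutinfo_le_hellinger2 t01.
by rewrite -AB natrM -/d invf_div divfK // mulf_neq0 // gt_eqF.
Qed.

End JointDistribution.

Theorem corollary4p2 (R : realType) :
  exists C : R, 0 < C /\
    forall (A B : finType) (p : A * B -> R),
      #|A| = #|B| -> is_distr p ->
      let d : R := (#|A|)%:R in
      let eta := hellinger2 p (fun ab => margA p ab.1 * margB p ab.2) in
      mutinfo p <= C * (eta * ln (d / eta)).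
Proof.
have ln2_gt0 : 0 < ln (2 : R) by rewrite ln_gt0 // ltr1n.
exists (6 / ln 2 + 15); split; first by rewrite addr_gt0 ?divr_gt0.
move=> A B p AB p_distr /=.
have := hellinger2_ge0 p (prodmarg p); rewrite le0r => /orP[/eqP eta0|eta_gt0].
  by rewrite (mutinfo_eq0 p_distr eta0) [hellinger2 _ _]eta0 mul0r mulr0.
exact: mutinfo_le_hellinger2_ln.
Qed.
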